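(* Let $n\ge1$, $m\ge0$ be integers and let non-negative integers $r_0,\dots,r_n$ satisfy $r_n=0$, $r_{n-1}=m$, $r_\ell\ge 2r_{\ell+1}$ for $\ell=n-2,\dots,0$, and let $k\ge 2r_0+1$. Let $T$ be an $n$-simplex. Then for $\ell=1,\dots,n-1$ and every $f\in\Delta_\ell(T)$, $$D(f,r_\ell)\setminus\Big[\bigcup_{i=0}^{\ell-1}\bigcup_{e\in\Delta_i(f)}D(e,r_i)\Big]=D(f,r_\ell)\setminus\Big[\bigcup_{i=0}^{\ell-1}\bigcup_{e\in\Delta_i(T)}D(e,r_i)\Big].$$
   Context: $\mathbb N$ includes $0$; $\mathbb T^n_k=\{\alpha\in\mathbb N^{n+1}:\sum_i\alpha_i=k\}$. $\Delta_i(T)$ (resp. $\Delta_i(f)$) is the set of $i$-dimensional faces of $T$ (resp. of $f$); a face $e$ is identified with its vertex index set $e\subseteq\{0,\dots,n\}$ and $e^*=\{0,\dots,n\}\setminus e$. $D(e,r)=\{\alpha\in\mathbb T^n_k:\sum_{i\in e^*}\alpha_i\le r\}$. *)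

From mathcomp Require Import all_boot all_order.
Set Implicit Arguments. Unset Strict Implicit. Unset Printing Implicit Defensive.

(* Multi-indices alpha in N^{n+1}, indexed by the vertices 'I_n.+1 of T. *)
Definition mindex (n : nat) := {ffun 'I_n.+1 -> nat}.

Definition in_Tnk (n k : nat) (a : mindex n) : bool := \sum_(i < n.+1) a i == k.

(* Faces of T are identified with their vertex index sets; an i-dimensional
   face has i+1 vertices.  Delta_i(f) = i-dimensional faces of the face f. *)
Definition faces (n i : nat) (f : {set 'I_n.+1}) : {set {set 'I_n.+1}} :=
  [set e : {set 'I_n.+1} | (e \subset f) && (#|e| == i.+1)].

Definition facesT (n i : nat) : {set {set 'I_n.+1}} := faces i [set: 'I_n.+1].

Definition D (n k : nat) (e : {set 'I_n.+1}) (r : nat) (a : mindex n) : bool :=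
  in_Tnk k a && (\sum_(i in ~: e) a i <= r).

(* A multi-index in D(e, r_i) and in D(f, r_l) lies in D(e :&: f, r_i + r_l),
   since the coordinates outside e :&: f are those outside e plus those
   outside f.  As r_i + r_l <= 2 r_0 < k, the face e :&: f of f is not empty.
   If e is not contained in f, then e :&: f has dimension j < i, and the
   halving condition gives r_i + r_l <= 2 r_(j+1) <= r_j; so every multi-index
   removed by a face of T is already removed by a face of f. *)

From mathcomp Require Import all_boot all_order.
From mathcomp Require Import zify.

Set Implicit Arguments.
Unset Strict Implicit.
Unset Printing Implicit Defensive.

Lemma leq_sum_setU (T : finType) (A B : {set T}) (F : T -> nat) :
  \sum_(x in A :|: B) F x <= \sum_(x in A) F x + \sum_(x in B) F x.
Proof.
rewrite (big_setID A) setUK setDUl setDv set0U leq_add2l.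
by apply: (sub_le_big leqnn (fun x y => leq_addr y x)) => x /setDP[].
Qed.

Lemma in_facesT n i (e : {set 'I_n.+1}) : (e \in facesT n i) = (#|e| == i.+1).
Proof. by rewrite inE subsetT. Qed.

Lemma faces_facesT n i (e f : {set 'I_n.+1}) :
  e \in faces i f -> e \in facesT n i.
Proof. by rewrite in_facesT inE => /andP[]. Qed.

Section DomainsD.

Variables (n k : nat).
Implicit Types (e f : {set 'I_n.+1}) (a : mindex n).

Lemma D_leq_radius e p q a : p <= q -> D k e p a -> D k e q a.
Proof. by move=> pq /andP[Tk ep]; rewrite /D Tk (leq_trans ep pq). Qed.

Lemma D_setI e f p q a : D k e p a -> D k f q a -> D k (e :&: f) (p + q) a.
Proof.
move=> /andP[Tk ep] /andP[_ fq]; rewrite /D Tk setCI /=.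
exact: leq_trans (leq_sum_setU _ _ _) (leq_add ep fq).
Qed.

Lemma D_set0 p a : D k set0 p a -> k <= p.
Proof.
move=> /andP[/eqP <- ]; rewrite setC0.
by under eq_bigl do rewrite inE.
Qed.

End DomainsD.

Section HalvingRadii.

Variables (n k : nat) (r : nat -> nat).
Hypothesis r_n : r n = 0.
Hypothesis r_halving : forall l, l.+2 <= n -> 2 * r l.+1 <= r l.
Hypothesis k_gt : (2 * r 0).+1 <= k.

Lemma r_step x : x < n -> r x.+1 <= r x.
Proof.
move=> xn; have [xSn | nxS] := ltnP x.+1 n.
  by have := r_halving xSn; lia.
have -> : x.+1 = n by apply/eqP; rewrite eqn_leq xn nxS.
by rewrite r_n.
Qed.

Lemma r_nonincr x y : x <= y -> y <= n -> r y <= r x.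
Proof.
move=> xy yn.
apply: (@homo_leq_in nat [pred z | z <= n] r (fun u v => v <= u)) => //.
- by move=> u v w vu wv; apply: leq_trans wv vu.
- by move=> u v _; rewrite !inE => vn z /andP[_ /ltnW zv]; apply: leq_trans vn.
- by move=> z _; rewrite inE => /r_step.
- by rewrite inE (leq_trans xy).
Qed.

Lemma D_meet_face l i (e f : {set 'I_n.+1}) (a : mindex n) :
  i < l -> l <= n -> #|e| = i.+1 -> D k e (r i) a -> D k f (r l) a ->
  exists2 j, j <= i & (e :&: f \in faces j f) && D k (e :&: f) (r j) a.
Proof.
move=> il ln card_e De Df.
have Def := D_setI De Df.
have ri0 : r i <= r 0 by apply: r_nonincr; lia.
have rli : r l <= r i by apply: r_nonincr; lia.
have ef_gt0 : 0 < #|e :&: f|.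
  rewrite card_gt0; apply: contraTneq Def => ->.
  by apply/negP => /D_set0; lia.
set j := #|e :&: f|.-1.
have card_ef : #|e :&: f| = j.+1 by rewrite prednK.
have ji : j <= i by rewrite -ltnS -card_ef -card_e subset_leq_card ?subsetIl.
exists j => //; rewrite inE subsetIr card_ef eqxx /=.
have [ji' | ij] := ltnP j i.
  have r_ij : r i <= r j.+1 by apply: r_nonincr; lia.
  have r_j : 2 * r j.+1 <= r j by apply: r_halving; lia.
  by apply: D_leq_radius Def; lia.
have -> : e :&: f = e.
  by apply/eqP; rewrite eqEcard subsetIl card_e card_ef ltnS.
by have -> : j = i by lia.
Qed.

End HalvingRadii.

Theorem mainTheorem6 (n m k : nat) (r : nat -> nat) :
  1 <= n ->
  r n = 0 -> r n.-1 = m ->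
  (forall l, l.+2 <= n -> 2 * r l.+1 <= r l) ->
  (2 * r 0).+1 <= k ->
  forall l, 1 <= l -> l <= n.-1 ->
  forall f : {set 'I_n.+1}, f \in facesT n l ->
  forall a : mindex n,
    (D k f (r l) a &&
       ~~ [exists i : 'I_l, [exists e in faces i f, D k e (r i) a]])
    =
    (D k f (r l) a &&
       ~~ [exists i : 'I_l, [exists e in facesT n i, D k e (r i) a]]).
Proof.
move=> _ r_n _ r_halving k_gt l _ ln f _ a.
case Df: (D k f (r l) a) => //=; congr (~~ _).
apply/existsP/existsP => -[i /existsP[e /andP[eF De]]].
  by exists i; apply/existsP; exists e; rewrite De (faces_facesT eF).
have ln' : l <= n by lia.
have card_e : #|e| = i.+1 by apply/eqP; rewrite -in_facesT.
have [j ji fj] := D_meet_face r_n r_halving k_gt (ltn_ord i) ln' card_e De Df.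
have jl : j < l := leq_ltn_trans ji (ltn_ord i).
by exists (Ordinal jl); apply/existsP; exists (e :&: f).
Qed.
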